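(* Let $X$ be a path-connected topological space, $Y\subset X$, $G$ a group, and $\mathcal{U}$ an open covering of $X$. Then the restriction map $Z^1(X,Y)\to Z^1_{\mathcal{U}}(X,Y)$ (restricting a cocycle from $P(X)$ to the set $P_{\mathcal{U}}(X)$ of short paths) is a bijection, and the induced map $H^1(X,Y)\to H^1_{\mathcal{U}}(X,Y)$ is a bijection.
   Context: Conventions: $I=[0,1]$; a path in $W$ is a continuous map $I\to W$; $P(W)$ is the set of all paths. For $p(1)=q(0)$, $p\cdot q$ is concatenation. Homotopies of paths are relative to $\{0,1\}$; $p\sim q$ means homotopic. $G$ has unit $1$. A $0$-cochain of $(X,Y)$ is a map $c\colon X\to G$ with $c|_Y=1$; they form a group $C^0(X,Y)$ under pointwise multiplication. A $1$-cochain is a map $u\colon P(X)\to G$ with $u(p)=1$ for paths $p$ with image in $Y$; a cocycle additionally satisfies $u(p)=u(q)$ if $p\sim q$ and $u(p\cdot q)=u(p)u(q)$ when $p\cdot q$ is defined; $Z^1(X,Y)$ is the set of cocycles; $C^0(X,Y)$ acts by $(c\bullet u)(p)=c(p(0))u(p)c(p(1))^{-1}$, and $H^1(X,Y)$ is the orbit set. Short versions: a path $p$ is short if $p(I)\subset U$ for some $U\in\mathcal{U}$; a homotopy $I\times[0,1]\to X$ is short if its image lies in some $U\in\mathcal{U}$. $P_{\mathcal{U}}(X)$ is the set of short paths. A short $1$-cochain is a map $u\colon P_{\mathcal{U}}(X)\to G$ with $u(p)=1$ for short paths $p$ with image in $Y$. It is a short cocycle if $u(p)=u(q)$ whenever there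 is a short homotopy relative to $\{0,1\}$ between $p$ and $q$, and $u(p\cdot q)=u(p)u(q)$ whenever $p\cdot q$ is defined and short. $Z^1_{\mathcal{U}}(X,Y)$ is the set of short cocycles; $C^0(X,Y)$ acts on it by the same formula, and $H^1_{\mathcal{U}}(X,Y)$ is the set of orbits. *)

From HB Require Import structures.
From mathcomp Require Import monoid.
From mathcomp Require Import all_boot all_order all_algebra.
From mathcomp Require Import all_classical all_reals topology subtype_topology.
From mathcomp Require Import Rstruct Rstruct_topology.

Set Implicit Arguments.
Unset Strict Implicit.
Unset Printing Implicit Defensive.

Local Open Scope classical_set_scope.
Local Open Scope ring_scope.
Import Order.TTheory GRing.Theory Num.Theory.

Definition unitI : Type := set_type (`[0%R, 1%R]%classic : set Rdefinitions.R).

Lemma unitI0_mem : (0%R : Rdefinitions.R) \in (`[0%R, 1%R]%classic : set Rdefinitions.R).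
Proof. by apply/mem_set; rewrite /= in_itv /= lexx ler01. Qed.

Lemma unitI1_mem : (1%R : Rdefinitions.R) \in (`[0%R, 1%R]%classic : set Rdefinitions.R).
Proof. by apply/mem_set; rewrite /= in_itv /= lexx ler01. Qed.

Definition I0 : unitI := exist _ 0%R unitI0_mem.
Definition I1 : unitI := exist _ 1%R unitI1_mem.

Record tpath (X : topologicalType) := Path {
  pfun :> unitI -> X;
  pcont : continuous pfun }.

(** r is the concatenation p . q :
    r(t) = p(2t) for t in [0,1/2], r(t) = q(2t-1) for t in [1/2,1]. *)
Definition is_concat (X : topologicalType) (p q r : tpath X) : Prop :=
  forall t s : unitI,
    (sval s = 2 * sval t -> r t = p s) /\
    (sval s = 2 * sval t - 1 -> r t = q s).

Definition is_rel_homotopy (X : topologicalType) (p q : tpath X)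
    (H : unitI * unitI -> X) : Prop :=
  [/\ continuous H,
      (forall s, H (s, I0) = p s),
      (forall s, H (s, I1) = q s) &
      (forall t, H (I0, t) = p I0 /\ H (I1, t) = p I1)].

Definition homotopic (X : topologicalType) (p q : tpath X) : Prop :=
  exists H, is_rel_homotopy p q H.

Definition open_cover (X : topologicalType) (cov : set (set X)) : Prop :=
  (forall U, cov U -> open U) /\ (forall x : X, exists U, cov U /\ U x).

Definition short_path (X : topologicalType) (cov : set (set X)) (p : tpath X) :=
  exists U, cov U /\ (forall t, U (p t)).

Definition short_homotopic (X : topologicalType) (cov : set (set X))
    (p q : tpath X) : Prop :=
  exists H, is_rel_homotopy p q H /\
    exists U, cov U /\ (forall z, U (H z)).

Definition spath (X : topologicalType) (cov : set (set X)) : Type :=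
  {p : tpath X | short_path cov p}.

Definition path_connected (X : topologicalType) : Prop :=
  forall x y : X, exists p : tpath X, p I0 = x /\ p I1 = y.

Definition cochain0 (X : topologicalType) (Y : set X) (G : groupType)
    (c : X -> G) : Prop :=
  forall y, Y y -> c y = 1%g.

Definition cocycle (X : topologicalType) (Y : set X) (G : groupType)
    (u : tpath X -> G) : Prop :=
  [/\ (forall p : tpath X, (forall t, Y (p t)) -> u p = 1%g),
      (forall p q : tpath X, homotopic p q -> u p = u q) &
      (forall p q r : tpath X, p I1 = q I0 -> is_concat p q r ->
          u r = (u p * u q)%g)].

Definition short_cocycle (X : topologicalType) (cov : set (set X)) (Y : set X)
    (G : groupType) (u : spath cov -> G) : Prop :=
  [/\ (forall p : spath cov, (forall t, Y (sval p t)) -> u p = 1%g),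
      (forall p q : spath cov, short_homotopic cov (sval p) (sval q) -> u p = u q) &
      (forall p q r : spath cov, sval p I1 = sval q I0 ->
          is_concat (sval p) (sval q) (sval r) -> u r = (u p * u q)%g)].

Definition act0 (X : topologicalType) (G : groupType) (c : X -> G)
    (u : tpath X -> G) : tpath X -> G :=
  fun p => (c (p I0) * u p * (c (p I1))^-1)%g.

Definition act0_short (X : topologicalType) (cov : set (set X)) (G : groupType)
    (c : X -> G) (u : spath cov -> G) : spath cov -> G :=
  fun p => (c (sval p I0) * u p * (c (sval p I1))^-1)%g.

(** Same orbit (same class in H^1, resp. H^1_U). *)
Definition cohomologous (X : topologicalType) (Y : set X) (G : groupType)
    (u v : tpath X -> G) : Prop :=
  exists c, cochain0 Y c /\ v = act0 c u.

Definition short_cohomologous (X : topologicalType) (cov : set (set X))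
    (Y : set X) (G : groupType) (u v : spath cov -> G) : Prop :=
  exists c, cochain0 Y c /\ v = act0_short c u.

Definition restr_short (X : topologicalType) (cov : set (set X)) (G : groupType)
    (u : tpath X -> G) : spath cov -> G :=
  fun p => u (sval p).
Arguments restr_short [X] cov [G] u _.

From HB Require Import structures.
From mathcomp Require Import monoid.
From mathcomp Require Import all_boot all_order all_algebra.
From mathcomp Require Import all_classical all_reals topology subtype_topology.
From mathcomp Require Import Rstruct Rstruct_topology normedtype ring lra interval_inference.

(** A short cocycle [w] extends to all paths: pulling the cover back along a path [p],
    the Lebesgue number lemma cuts [p] into short pieces, and the extension multiplies the
    values of [w] on them.  Every path and homotopy is handled as a continuous map from the
    plane (extended by clamping), so that the pieces are straight segments.  Splitting a
    short segment in two is a short homotopy followed by a concatenation, hence refining a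
    subdivision does not change the product; so the extension is well defined, multiplicative
    and agrees with [w] on short paths.  Homotopy invariance is the grid argument: cut the
    square of a homotopy into cells mapped into single members of the cover, and move the
    bottom row of the grid to the top one row at a time, each cell contributing one short
    homotopy and the vertical sides only constant paths.  Conversely a cocycle is determined
    by its values on the pieces of a fine subdivision, so restriction is injective; as the
    action of [C^0] commutes with restriction, the bijection descends to [H^1]. *)

Import Order.TTheory GRing.Theory Num.Theory.
Set Implicit Arguments.
Unset Strict Implicit.
Unset Printing Implicit Defensive.

Local Open Scope classical_set_scope.
Local Open Scope ring_scope.
Notation R := Rdefinitions.R.

Lemma continuous_sval : continuous (fun t : unitI => sval t).
Proof. exact: (@initial_continuous _ _ set_val). Qed.

Lemma unitI_bounds (t : unitI) : 0 <= sval t <= 1.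
Proof. by case: t => x hx; move/set_mem: (hx); rewrite /= in_itv. Qed.

Definition clampR (x : R) : R := Num.min (Num.max x 0) 1.

Lemma clampR_bounds x : 0 <= clampR x <= 1.
Proof. by rewrite /clampR le_min ler01 le_max lexx orbT ge_min lexx orbT. Qed.

Lemma clampR_id x : 0 <= x <= 1 -> clampR x = x.
Proof. by case/andP=> x0 x1; rewrite /clampR max_l ?min_l. Qed.

Lemma clampR_le0 x : x <= 0 -> clampR x = 0.
Proof. by move=> x0; rewrite /clampR max_r ?min_l ?ler01. Qed.

Lemma clampR_ge1 x : 1 <= x -> clampR x = 1.
Proof. by move=> x1; rewrite /clampR max_l ?min_r // (le_trans ler01). Qed.

Lemma continuous_clampR : continuous clampR.
Proof.
move=> x; apply: (@continuous_min R R (fun y => Num.max y 0) (fun=> 1));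
  last exact: cvg_cst.
by apply: (@continuous_max R R id (fun=> 0)); [exact: cvg_id | exact: cvg_cst].
Qed.

Lemma clampR_mem x : clampR x \in (`[0, 1]%classic : set R).
Proof. by apply/mem_set; rewrite /= in_itv /= clampR_bounds. Qed.

Definition clamp (x : R) : unitI := exist _ (clampR x) (clampR_mem x).

Lemma continuous_clamp : continuous clamp.
Proof. by apply: (@continuous_comp_initial _ _ _ set_val); exact: continuous_clampR. Qed.

Lemma clamp_sval (t : unitI) : clamp (sval t) = t.
Proof.
by case: t => x hx; apply: eq_exist; rewrite /= clampR_id // (unitI_bounds (exist _ x hx)).
Qed.

Lemma clamp0 : clamp 0 = I0.
Proof. by apply: eq_exist; rewrite clampR_id // lexx ler01. Qed.

Lemma clamp1 : clamp 1 = I1.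
Proof. by apply: eq_exist; rewrite clampR_id // lexx ler01. Qed.

Definition lerp (A B : R * R) (l : R) : R * R :=
  (A.1 + l * (B.1 - A.1), A.2 + l * (B.2 - A.2)).

Lemma lerp0 A B : lerp A B 0 = A.
Proof. by case: A => a1 a2; rewrite /lerp /= !mul0r !addr0. Qed.

Lemma lerp1 A B : lerp A B 1 = B.
Proof. by case: B => b1 b2; rewrite /lerp /= !mul1r !subrKC. Qed.

Lemma lerpxx A l : lerp A A l = A.
Proof. by case: A => a1 a2; rewrite /lerp /= !subrr !mulr0 !addr0. Qed.

Lemma lerp_lerp A B a b l :
  lerp (lerp A B a) (lerp A B b) l = lerp A B (a + l * (b - a)).
Proof. by rewrite /lerp /=; congr (_, _); ring. Qed.

Lemma lerp_lerpr A B a l : lerp A (lerp A B a) l = lerp A B (l * a).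
Proof. by rewrite /lerp /=; congr (_, _); ring. Qed.

Lemma lerp_unit_bounds (a b l : R) : 0 <= a <= 1 -> 0 <= b <= 1 -> 0 <= l <= 1 ->
  0 <= a + l * (b - a) <= 1.
Proof. by move=> /andP[? ?] /andP[? ?] /andP[? ?]; apply/andP; split; nra. Qed.

Lemma continuous_addR (T : topologicalType) (f g : T -> R) :
  continuous f -> continuous g -> continuous (fun x => f x + g x).
Proof. by move=> cf cg x; exact: (@cvgD R R^o _ (nbhs x) _ f g _ _ (cf x) (cg x)). Qed.

Lemma continuous_subR (T : topologicalType) (f g : T -> R) :
  continuous f -> continuous g -> continuous (fun x => f x - g x).
Proof. by move=> cf cg x; exact: (@cvgB R R^o _ (nbhs x) _ f g _ _ (cf x) (cg x)). Qed.

Lemma continuous_mulR (T : topologicalType) (f g : T -> R) :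
  continuous f -> continuous g -> continuous (fun x => f x * g x).
Proof. by move=> cf cg x; exact: (@cvgM R _ (nbhs x) _ f g _ _ (cf x) (cg x)). Qed.

Lemma continuous_pairR (T : topologicalType) (f g : T -> R) :
  continuous f -> continuous g -> continuous (fun x => (f x, g x)).
Proof. by move=> cf cg x; exact: cvg_pair (cf x) (cg x). Qed.

Lemma continuous_coords (T : topologicalType) (f : T -> R * R) : continuous f ->
  continuous (fun x => (f x).1) /\ continuous (fun x => (f x).2).
Proof.
by move=> cf; split=> x; apply: continuous_comp (cf x) _; [exact: cvg_fst | exact: cvg_snd].
Qed.

Lemma continuous_lerp (T : topologicalType) (f g : T -> R * R) (h : T -> R) :
  continuous f -> continuous g -> continuous h ->
  continuous (fun z => lerp (f z) (g z) (h z)).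
Proof.
move=> /continuous_coords[f1 f2] /continuous_coords[g1 g2] ch.
by apply: continuous_pairR; apply: continuous_addR => //;
  apply: continuous_mulR => //; exact: continuous_subR.
Qed.

Lemma lerp_continuous A B : continuous (lerp A B).
Proof.
apply: (@continuous_lerp _ (fun=> A) (fun=> B) id) => x;
  by [exact: cvg_cst | exact: cvg_id].
Qed.

(** The broken line through [A], [B], [C]: [A -> B] on [[0, 1/2]], [B -> C] on [[1/2, 1]]. *)
Definition broken_line (A B C : R * R) (s : R) : R * R :=
  (A.1 + clampR (2 * s) * (B.1 - A.1) + clampR (2 * s - 1) * (C.1 - B.1),
   A.2 + clampR (2 * s) * (B.2 - A.2) + clampR (2 * s - 1) * (C.2 - B.2)).

Lemma continuous_broken_line A B C : continuous (broken_line A B C).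
Proof.
have cst (c : R) : continuous (fun _ : R => c) by move=> x; exact: cvg_cst.
have cid : continuous (@id R) by move=> x; exact: cvg_id.
have c1 : continuous (fun s : R => clampR (2 * s)).
  move=> s; apply: (@continuous_comp _ _ _ (fun s : R => 2 * s) clampR s);
    [exact: continuous_mulR | exact: continuous_clampR].
have c2 : continuous (fun s : R => clampR (2 * s - 1)).
  move=> s; apply: (@continuous_comp _ _ _ (fun s : R => 2 * s - 1) clampR s);
    last exact: continuous_clampR.
  by apply: continuous_subR => //; exact: continuous_mulR.
by apply: continuous_pairR; (apply: continuous_addR; first apply: continuous_addR);
  try exact: cst; apply: continuous_mulR => //; exact: cst.
Qed.

Lemma broken_line_lerp A B l s :
  broken_line A (lerp A B l) B s =
  lerp A B (clampR (2 * s) * l + clampR (2 * s - 1) * (1 - l)).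
Proof. by rewrite /broken_line /lerp /=; congr (_, _); ring. Qed.

Lemma broken_line0 A B C : broken_line A B C 0 = A.
Proof.
have c2 : clampR (2 * 0) = 0 by apply: clampR_le0; lra.
have c1 : clampR (2 * 0 - 1) = 0 by apply: clampR_le0; lra.
rewrite /broken_line c2 c1.
by case: A => a1 a2; rewrite /= !mul0r !addr0.
Qed.

Lemma broken_line1 A B C : broken_line A B C 1 = C.
Proof.
have c2 : clampR (2 * 1) = 1 by apply: clampR_ge1; lra.
have c1 : clampR (2 * 1 - 1) = 1 by apply: clampR_ge1; lra.
rewrite /broken_line c2 c1.
by case: C => x y; congr (_, _); rewrite /=; ring.
Qed.

Lemma unit_square_lebesgue (X : topologicalType) (cov : set (set X))
    (Phi : R * R -> X) :
  continuous Phi -> open_cover cov ->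
  exists N : nat, forall z : R * R, (`[0, 1] `*` `[0, 1]) z ->
    exists2 U, cov U & forall z', ball z N.+1%:R^-1 z' -> U (Phi z').
Proof.
move=> Phi_cont [cov_open covered].
have : compact (`[0, 1] `*` `[0, 1] : set (R * R)).
  by apply: compact_setX; exact: segment_compact.
move=> /compact_near_coveringP /(_ nat \oo (fun n z => exists2 U, cov U &
          forall z', ball z n.+1%:R^-1 z' -> U (Phi z'))) [].
- move=> x _; have [U [covU Ux]] := covered (Phi x).
  have /(Phi_cont x) : nbhs (Phi x) U.
    by apply: open_nbhs_nbhs; split => //; exact: cov_open.
  rewrite /= nbhs_simpl => /nbhs_ballP[e /= e0 eU].
  have e2 : 0 < e / 2 by rewrite divr_gt0.
  exists (ball x (e / 2), [set n | n.+1%:R^-1 < e / 2]).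
    by split; [exact: nbhsx_ballx | exact: (near_infty_natSinv_lt (PosNum e2))].
  case=> y n [xy /= ne]; exists U => // z yz; apply: eU.
  by apply: le_ball (ball_triangle xy yz); rewrite [leRHS](splitr e) lerD2l ltW.
- by move=> N _ HN; exists N => z Kz; exact: (HN N (leqnn N) z Kz).
Qed.

Lemma tpath_ext (X : topologicalType) (p q : tpath X) : (forall t, p t = q t) -> p = q.
Proof.
case: p q => f f_cont [g g_cont] /= /funext fg; subst g.
by congr Path; exact: Prop_irrelevance.
Qed.

Section PlanePaths.
Variables (X : topologicalType) (Phi : R * R -> X).
Hypothesis Phi_cont : continuous Phi.

Lemma plane_path_subproof (g : R -> R * R) : continuous g ->
  continuous (fun t : unitI => Phi (g (sval t))).
Proof.
move=> g_cont t.
apply: (@continuous_comp _ _ _ (fun t : unitI => sval t) (Phi \o g));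
  [exact: continuous_sval | apply: continuous_comp; [exact: g_cont | exact: Phi_cont]].
Qed.

Definition plane_path (g : R -> R * R) (g_cont : continuous g) : tpath X :=
  Path (plane_path_subproof g_cont).

Definition segment (A B : R * R) := plane_path (@lerp_continuous A B).

Definition broken_path (A B C : R * R) := plane_path (@continuous_broken_line A B C).

Lemma segment0 A B : segment A B I0 = Phi A.
Proof. by rewrite /= lerp0. Qed.

Lemma segment1 A B : segment A B I1 = Phi B.
Proof. by rewrite /= lerp1. Qed.

Lemma segment_concat A B C : is_concat (segment A B) (segment B C) (broken_path A B C).
Proof.
move=> t s; have /andP[s0 s1] := unitI_bounds s.
split=> /= st; congr Phi; rewrite /broken_line /lerp -st (@clampR_id (sval s)) ?s0 ?s1 //.
  by rewrite clampR_le0 ?subr_le0 // !mul0r !addr0.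
by rewrite clampR_ge1; [congr (_, _); ring | lra].
Qed.

Lemma plane_path_homotopic (g1 g2 : R -> R * R) (g1_cont : continuous g1)
    (g2_cont : continuous g2) (S : set X) :
  g1 0 = g2 0 -> g1 1 = g2 1 ->
  (forall s t, 0 <= s <= 1 -> 0 <= t <= 1 -> S (Phi (lerp (g1 s) (g2 s) t))) ->
  exists2 H, is_rel_homotopy (plane_path g1_cont) (plane_path g2_cont) H &
    forall z, S (H z).
Proof.
move=> g0 g1' gS.
exists (fun z : unitI * unitI => Phi (lerp (g1 (sval z.1)) (g2 (sval z.1)) (sval z.2))).
  split => [|s|s|t] /=; rewrite ?lerp0 ?lerp1 -?g0 -?g1' ?lerpxx //.
  have c1 : continuous (fun z : unitI * unitI => sval z.1).
    move=> y; apply: (@continuous_comp _ _ _ fst (fun t : unitI => sval t));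
      [exact: cvg_fst | exact: continuous_sval].
  have c2 : continuous (fun z : unitI * unitI => sval z.2).
    move=> y; apply: (@continuous_comp _ _ _ snd (fun t : unitI => sval t));
      [exact: cvg_snd | exact: continuous_sval].
  have cH : continuous (fun z : unitI * unitI =>
      lerp (g1 (sval z.1)) (g2 (sval z.1)) (sval z.2)).
    by apply: continuous_lerp => // y; apply: continuous_comp (c1 y) _;
      [exact: g1_cont | exact: g2_cont].
  by move=> z; apply: continuous_comp (cH z) _; exact: Phi_cont.
by case=> s t /=; apply: gS; exact: unitI_bounds.
Qed.

Lemma segment_split_homotopic A B l (S : set X) : 0 <= l <= 1 ->
  (forall r, 0 <= r <= 1 -> S (Phi (lerp A B r))) ->
  exists2 H, is_rel_homotopy (segment A B) (broken_path A (lerp A B l) B) H &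
    forall z, S (H z).
Proof.
move=> /andP[l0 l1] segS; apply: plane_path_homotopic.
- by rewrite broken_line0 lerp0.
- by rewrite broken_line1 lerp1.
move=> s t s01 t01; rewrite broken_line_lerp lerp_lerp; apply: segS.
apply: lerp_unit_bounds => //.
have /andP[a0 a1] := clampR_bounds (2 * s).
have /andP[b0 b1] := clampR_bounds (2 * s - 1).
by apply/andP; split; nra.
Qed.

End PlanePaths.

Lemma big_ord_mul (T : Type) (idx : T) (op : Monoid.law idx) n m (f : nat -> T) :
  \big[op/idx]_(i < n * m) f i = \big[op/idx]_(i < n) \big[op/idx]_(k < m) f (i * m + k)%N.
Proof.
elim: n => [|n IH]; first by rewrite mul0n !big_ord0.
by rewrite mulSnr big_split_ord IH big_ord_recr.
Qed.

Lemma prodg_telescope (G : groupType) n (b t c : nat -> G) :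
  (forall i, (i < n)%N -> (b i * c i.+1 = c i * t i)%g) -> c 0%N = 1%g -> c n = 1%g ->
  \big[*%g/1%g]_(i < n) b i = \big[*%g/1%g]_(i < n) t i.
Proof.
move=> bct c0 cn.
suff conj k : (k <= n)%N ->
    (c 0%N * \big[*%g/1]_(i < k) t i = \big[*%g/1]_(i < k) b i * c k)%g.
  by have := conj n (leqnn n); rewrite c0 cn mul1g mulg1.
elim: k => [|k IH] lekn; first by rewrite !big_ord0 mulg1 mul1g.
by rewrite !big_ord_recr /= mulgA IH 1?ltnW // -!mulgA bct.
Qed.

Definition subdiv_point (A B : R * R) (n i : nat) : R * R := lerp A B (i%:R / n%:R).

Lemma subdiv_point_lerp A B n i s : (0 < n)%N ->
  lerp (subdiv_point A B n i) (subdiv_point A B n i.+1) s = lerp A B ((i%:R + s) / n%:R).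
Proof.
move=> n0; have nR : n%:R != 0 :> R by rewrite pnatr_eq0 -lt0n.
by rewrite /subdiv_point lerp_lerp -addn1 natrD; congr lerp; field.
Qed.

Lemma subdiv_point_refine A B n m i k : (0 < n)%N -> (0 < m)%N ->
  subdiv_point A B (n * m) (i * m + k) =
  lerp (subdiv_point A B n i) (subdiv_point A B n i.+1) (k%:R / m%:R).
Proof.
move=> n0 m0; have mR : m%:R != 0 :> R by rewrite pnatr_eq0 -lt0n.
have nR : n%:R != 0 :> R by rewrite pnatr_eq0 -lt0n.
by rewrite subdiv_point_lerp // /subdiv_point natrD !natrM; congr lerp; field; rewrite ?nR ?mR.
Qed.

Lemma nat_ratio_bounds (k m : nat) : (k <= m)%N -> 0 <= (k%:R / m%:R : R) <= 1.
Proof.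
move=> km; rewrite divr_ge0 //=; case: m km => [|m] km; first by rewrite invr0 mulr0.
by rewrite ler_pdivrMr ?ltr0Sn // mul1r ler_nat.
Qed.

Section Subdivision.
Variables (X : topologicalType) (G : groupType) (Phi : R * R -> X).
Hypothesis Phi_cont : continuous Phi.
Variables (F : tpath X -> G) (good : R * R -> R * R -> Prop).

Definition subdiv_prod A B n := \big[*%g/1%g]_(i < n)
  F (segment Phi_cont (subdiv_point A B n i) (subdiv_point A B n i.+1)).

Definition fine_subdiv A B n := (0 < n)%N /\
  forall i, (i < n)%N -> good (subdiv_point A B n i) (subdiv_point A B n i.+1).

Hypothesis F_split : forall A B l, good A B -> 0 <= l <= 1 ->
  F (segment Phi_cont A B) =
  (F (segment Phi_cont A (lerp A B l)) * F (segment Phi_cont (lerp A B l) B))%g.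
Hypothesis good_lerp : forall A B a b, good A B -> 0 <= a <= 1 -> 0 <= b <= 1 ->
  good (lerp A B a) (lerp A B b).

Lemma segment_subdiv_prod n A B : good A B ->
  F (segment Phi_cont A B) = subdiv_prod A B n.+1.
Proof.
elim: n A B => [|n IH] A B gAB.
  by rewrite /subdiv_prod big_ord1 /subdiv_point /= !divr1 mulr0n lerp0 lerp1.
pose l : R := n.+1%:R / n.+2%:R.
have l01 : 0 <= l <= 1 by apply: nat_ratio_bounds.
have gAl : good A (lerp A B l).
  by have := @good_lerp A B 0 l gAB; rewrite lerp0; apply=> //; rewrite lexx ler01.
rewrite (F_split gAB l01) (IH _ _ gAl) /subdiv_prod [in RHS]big_ord_recr /=.
have n2R : n.+2%:R != 0 :> R by rewrite pnatr_eq0.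
congr (_ * _)%g.
  apply: eq_bigr => i _; congr (F (segment _ _ _));
  by rewrite /subdiv_point /l lerp_lerpr mulrA divfK.
by rewrite /subdiv_point /= divff // lerp1.
Qed.

Lemma subdiv_prod_refine A B n m : fine_subdiv A B n -> (0 < m)%N ->
  subdiv_prod A B (n * m) = subdiv_prod A B n.
Proof.
case=> n0 fine; case: m => // m _.
pose f j := F (segment Phi_cont (subdiv_point A B (n * m.+1) j)
                               (subdiv_point A B (n * m.+1) j.+1)).
rewrite /subdiv_prod (big_ord_mul _ _ _ f); apply: eq_bigr => i _.
rewrite (segment_subdiv_prod m (fine i (ltn_ord i))); apply: eq_bigr => k _.
by rewrite /f -addnS !subdiv_point_refine.
Qed.

Lemma fine_subdiv_refine A B n m : fine_subdiv A B n -> (0 < m)%N ->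
  fine_subdiv A B (n * m).
Proof.
move=> [n0 fine] m0; split=> [|j ltj]; first by rewrite muln_gt0 n0.
have ltjn : (j %/ m < n)%N by rewrite ltn_divLR.
have ltjm : (j %% m < m)%N by rewrite ltn_mod.
rewrite (divn_eq j m) -addnS !subdiv_point_refine //.
apply: good_lerp; first exact: fine.
  by apply: nat_ratio_bounds; exact: ltnW.
exact: nat_ratio_bounds.
Qed.

Lemma fine_subdiv_prod_eq A B n1 n2 :
  fine_subdiv A B n1 -> fine_subdiv A B n2 -> subdiv_prod A B n1 = subdiv_prod A B n2.
Proof.
move=> f1 f2; rewrite -(subdiv_prod_refine f1 f2.1) mulnC.
by rewrite (subdiv_prod_refine f2 f1.1).
Qed.

End Subdivision.

Lemma ball_step (a x : R) N : a <= x <= a + N.+2%:R^-1 -> ball a N.+1%:R^-1 x.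
Proof.
move=> /andP[ax xa]; rewrite /ball /= ler0_norm ?subr_le0 // opprB ltrBlDl.
by apply: le_lt_trans xa _; rewrite ltrD2l ltf_pV2 ?posrE ?ltr0Sn // ltr_nat.
Qed.

Definition in_square (a b d : R) (z : R * R) := a <= z.1 <= a + d /\ b <= z.2 <= b + d.

Lemma in_square_lerp a b d z1 z2 l : in_square a b d z1 -> in_square a b d z2 ->
  0 <= l <= 1 -> in_square a b d (lerp z1 z2 l).
Proof.
move=> [/andP[? ?] /andP[? ?]] [/andP[? ?] /andP[? ?]] /andP[? ?].
by split; apply/andP; split; rewrite /=; nra.
Qed.

Lemma in_square_broken_line a b d A B C s : in_square a b d A -> in_square a b d B ->
  in_square a b d C -> in_square a b d (broken_line A B C s).
Proof.
move=> inA inB inC; have [le2s|le12s] := lerP (2 * s) 1.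
  have -> : broken_line A B C s = lerp A B (clampR (2 * s)).
    by rewrite /broken_line /lerp (@clampR_le0 (2 * s - 1)); [congr (_, _); ring | lra].
  exact: in_square_lerp (clampR_bounds _).
have -> : broken_line A B C s = lerp B C (clampR (2 * s - 1)).
  by rewrite /broken_line /lerp (@clampR_ge1 (2 * s)); [congr (_, _); ring | lra].
exact: in_square_lerp (clampR_bounds _).
Qed.

Lemma nat_step_bounds n i i' : (0 < n)%N -> (i <= i' <= i.+1)%N ->
  i%:R / n%:R <= (i'%:R / n%:R : R) <= i%:R / n%:R + n%:R^-1.
Proof.
move=> n0 /andP[ii' i'i]; have ninv : 0 < n%:R^-1 :> R by rewrite invr_gt0 ltr0n.
rewrite ler_pM2r // ler_nat ii' /= -[X in _ <= _ + X]mul1r -mulrDl ler_pM2r //.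
by rewrite natr1 ler_nat.
Qed.

Lemma unit_square_cells (X : topologicalType) (cov : set (set X)) (Phi : R * R -> X) N :
  (forall z : R * R, (`[0, 1] `*` `[0, 1]) z ->
     exists2 U, cov U & forall z', ball z N.+1%:R^-1 z' -> U (Phi z')) ->
  forall i j, (i < N.+2)%N -> (j < N.+2)%N ->
  exists2 U, cov U & forall z,
    in_square (i%:R / N.+2%:R) (j%:R / N.+2%:R) N.+2%:R^-1 z -> U (Phi z).
Proof.
move=> lebN i j ltin ltjn.
have ij_square : (`[0, 1] `*` `[0, 1] : set (R * R)) (i%:R / N.+2%:R, j%:R / N.+2%:R).
  by split; rewrite /= in_itv /=; apply: nat_ratio_bounds; exact: ltnW.
have [U covU ballU] := lebN _ ij_square.
by exists U => // z [z1 z2]; apply: ballU; split; exact: ball_step.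
Qed.

Lemma cocycle_segment_split (X : topologicalType) (Y : set X) (G : groupType)
    (Phi : R * R -> X) (Phi_cont : continuous Phi) (u : tpath X -> G) :
  cocycle Y u -> forall A B l, 0 <= l <= 1 ->
  u (segment Phi_cont A B) =
  (u (segment Phi_cont A (lerp A B l)) * u (segment Phi_cont (lerp A B l) B))%g.
Proof.
move=> [_ u_homot u_concat] A B l l01.
have [H AB_H _] := @segment_split_homotopic _ _ Phi_cont A B l setT l01 (fun _ _ => I).
rewrite (u_homot _ _ (ex_intro _ H AB_H)).
by apply: u_concat; [rewrite segment1 segment0 | exact: segment_concat].
Qed.

Section ShortExtension.
Variables (X : topologicalType) (cov : set (set X)) (Y : set X) (G : groupType).
Hypothesis cov_open_cover : open_cover cov.
Variable w : spath cov -> G.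
Hypothesis w_cocycle : short_cocycle Y w.

(** The value [1] on paths that are not short is never used. *)
Definition short_extend (p : tpath X) : G :=
  if pselect (short_path cov p) is left p_short then w (exist _ p p_short) else 1%g.

Lemma short_extendE p (p_short : short_path cov p) :
  short_extend p = w (exist _ p p_short).
Proof.
rewrite /short_extend; case: pselect => [p_short'|//].
by congr w; apply: eq_exist.
Qed.

Lemma short_extend_homotopic p q : short_path cov p -> short_path cov q ->
  short_homotopic cov p q -> short_extend p = short_extend q.
Proof.
case: w_cocycle => _ w_homot _ p_short q_short pq.
by rewrite (short_extendE p_short) (short_extendE q_short); exact: w_homot.
Qed.

Lemma short_extend_concat p q r :
  short_path cov p -> short_path cov q -> short_path cov r ->
  p I1 = q I0 -> is_concat p q r -> short_extend r = (short_extend p * short_extend q)%g.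
Proof.
case: w_cocycle => _ _ w_concat p_short q_short r_short pq pqr.
rewrite (short_extendE p_short) (short_extendE q_short) (short_extendE r_short).
exact: (w_concat (exist _ p p_short) (exist _ q q_short) (exist _ r r_short)).
Qed.

Lemma short_extend_const (p : tpath X) x : (forall t, p t = x) -> short_extend p = 1%g.
Proof.
move=> px; have [U [covU Ux]] := cov_open_cover.2 x.
have p_short : short_path cov p by exists U; split => // t; rewrite px.
have ppp : is_concat p p p by move=> t s; split=> _; rewrite !px.
have := short_extend_concat p_short p_short p_short _ ppp.
rewrite !px => /(_ erefl) ppp_eq.
by apply: (@mulgI _ (short_extend p)); rewrite mulg1 -ppp_eq.
Qed.

Section PlaneSegments.
Variables (Phi : R * R -> X) (Phi_cont : continuous Phi).

Definition short_segment A B :=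
  exists2 U, cov U & forall r, 0 <= r <= 1 -> U (Phi (lerp A B r)).

Lemma short_segment_lerp A B a b : short_segment A B -> 0 <= a <= 1 -> 0 <= b <= 1 ->
  short_segment (lerp A B a) (lerp A B b).
Proof.
move=> [U covU ABU] a01 b01; exists U => // r r01.
by rewrite lerp_lerp; apply: ABU; exact: lerp_unit_bounds.
Qed.

Lemma short_segment_path A B : short_segment A B -> short_path cov (segment Phi_cont A B).
Proof. by move=> [U covU ABU]; exists U; split => // t; apply: ABU; exact: unitI_bounds. Qed.

Lemma short_extend_segment_split A B l : short_segment A B -> 0 <= l <= 1 ->
  short_extend (segment Phi_cont A B) =
  (short_extend (segment Phi_cont A (lerp A B l)) *
   short_extend (segment Phi_cont (lerp A B l) B))%g.
Proof.
move=> AB_short l01; have [U covU ABU] := AB_short.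
have zero01 : 0 <= (0 : R) <= 1 by rewrite lexx ler01.
have one01 : 0 <= (1 : R) <= 1 by rewrite lexx ler01.
have Al_short := short_segment_lerp AB_short zero01 l01; rewrite lerp0 in Al_short.
have lB_short := short_segment_lerp AB_short l01 one01; rewrite lerp1 in lB_short.
have [H AB_H HU] := @segment_split_homotopic _ _ Phi_cont A B l U l01 ABU.
have broken_short : short_path cov (broken_path Phi_cont A (lerp A B l) B).
  by exists U; split => // t; case: AB_H => _ _ <- _; exact: HU.
rewrite (short_extend_homotopic (short_segment_path AB_short) broken_short); last first.
  by exists H; split => //; exists U.
apply: (short_extend_concat (short_segment_path Al_short) (short_segment_path lB_short)
  broken_short); by [rewrite segment1 segment0 | exact: segment_concat].
Qed.

End PlaneSegments.
End ShortExtension.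

Lemma subdiv_param_bounds n i (s : R) : (i < n)%N -> 0 <= s <= 1 ->
  0 <= (i%:R + s) / n%:R <= 1.
Proof.
move=> ltin /andP[s0 s1].
have n0 : 0 < n%:R :> R by rewrite ltr0n (leq_ltn_trans _ ltin).
have : i.+1%:R <= n%:R :> R by rewrite ler_nat.
rewrite -addn1 natrD => le_in; apply/andP; split.
  by rewrite divr_ge0 ?addr_ge0.
by rewrite ler_pdivrMr // mul1r; lra.
Qed.

Lemma subdiv_axis_lerp n i s : (0 < n)%N ->
  lerp (subdiv_point (0, 0) (1, 0) n i) (subdiv_point (0, 0) (1, 0) n i.+1) s =
  ((i%:R + s) / n%:R, 0).
Proof. by move=> n0; rewrite subdiv_point_lerp // /lerp /=; congr (_, _); ring. Qed.

Lemma concat_first_half (X : topologicalType) (p q r : tpath X) x :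
  is_concat p q r -> 0 <= x <= 1 -> r (clamp (x / 2)) = p (clamp x).
Proof.
move=> pqr /andP[x0 x1]; apply: (pqr _ _).1 => /=.
by rewrite !clampR_id; [field | apply/andP; split; lra | apply/andP; split; lra].
Qed.

Lemma concat_second_half (X : topologicalType) (p q r : tpath X) x :
  is_concat p q r -> 0 <= x <= 1 -> r (clamp ((x + 1) / 2)) = q (clamp x).
Proof.
move=> pqr /andP[x0 x1]; apply: (pqr _ _).2 => /=.
by rewrite !clampR_id; [field | apply/andP; split; lra | apply/andP; split; lra].
Qed.

Section CocycleExtension.
Variables (X : topologicalType) (cov : set (set X)) (Y : set X) (G : groupType).
Hypothesis cov_open_cover : open_cover cov.

Definition path_plane (p : tpath X) (z : R * R) : X := p (clamp z.1).

Lemma continuous_path_plane p : continuous (path_plane p).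
Proof.
move=> z; apply: (@continuous_comp _ _ _ (fun z : R * R => clamp z.1) p).
  apply: (@continuous_comp _ _ _ fst clamp); [exact: cvg_fst | exact: continuous_clamp].
exact: pcont.
Qed.

Lemma segment_path_plane p : segment (@continuous_path_plane p) (0, 0) (1, 0) = p.
Proof.
by apply: tpath_ext => t; rewrite /= /path_plane /lerp /= subr0 mulr1 add0r clamp_sval.
Qed.

Lemma segment_path_plane_piece p n i t : (0 < n)%N ->
  segment (@continuous_path_plane p)
    (subdiv_point (0, 0) (1, 0) n i) (subdiv_point (0, 0) (1, 0) n i.+1) t =
  p (clamp ((i%:R + sval t) / n%:R)).
Proof. by move=> n0; rewrite /= subdiv_axis_lerp. Qed.

Definition fine_path p n := fine_subdiv (short_segment cov (path_plane p)) (0, 0) (1, 0) n.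

Lemma fine_path_exists p : exists n, fine_path p n.
Proof.
have [N lebN] := unit_square_lebesgue (@continuous_path_plane p) cov_open_cover.
exists N.+2; split => // i ltin.
have [U covU cellU] := unit_square_cells lebN ltin (ltn0Sn N.+1).
exists U => // r /andP[r0 r1]; apply: cellU; rewrite subdiv_axis_lerp //.
split; rewrite /= ?mul0r ?add0r ?lexx ?invr_ge0 ?ler0n // mulrDl lerDl divr_ge0 //=.
by rewrite lerD2l -[leRHS]mul1r ler_pM2r ?invr_gt0 ?ltr0Sn.
Qed.

Lemma fine_path_mul p n m : fine_path p n -> (0 < m)%N -> fine_path p (n * m).
Proof. exact: (fine_subdiv_refine (@short_segment_lerp _ _ _)). Qed.

Lemma cocycle_eq_on_short (u v : tpath X -> G) : cocycle Y u -> cocycle Y v ->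
  (forall sp : spath cov, u (sval sp) = v (sval sp)) -> u = v.
Proof.
move=> u_coc v_coc uv; apply: funext => p.
have [[|n] [//= _ p_fine]] := fine_path_exists p.
have cocycle_split (f : tpath X -> G) : cocycle Y f -> forall A B l, True -> 0 <= l <= 1 ->
    f (segment (@continuous_path_plane p) A B) =
    (f (segment (@continuous_path_plane p) A (lerp A B l)) *
     f (segment (@continuous_path_plane p) (lerp A B l) B))%g.
  by move=> f_coc A B l _; exact: (cocycle_segment_split _ f_coc).
have true_lerp (A B : R * R) (a b : R) : True -> 0 <= a <= 1 -> 0 <= b <= 1 -> True by [].
rewrite -(segment_path_plane p) !(segment_subdiv_prod (cocycle_split _ _) true_lerp n I) //.
apply: eq_bigr => i _.
exact: (uv (exist _ _ (short_segment_path _ (p_fine i (ltn_ord i))))).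
Qed.

Variable w : spath cov -> G.
Hypothesis w_cocycle : short_cocycle Y w.

Definition cocycle_ext (p : tpath X) : G :=
  subdiv_prod (@continuous_path_plane p) (short_extend w) (0, 0) (1, 0)
    (xget 0%N [set n | fine_path p n]).

Lemma cocycle_extE p n : fine_path p n ->
  cocycle_ext p = subdiv_prod (@continuous_path_plane p) (short_extend w) (0, 0) (1, 0) n.
Proof.
move=> p_fine; apply: (fine_subdiv_prod_eq
  (short_extend_segment_split w_cocycle _) (@short_segment_lerp _ _ _)) => //.
exact: (xgetPex 0%N (fine_path_exists p)).
Qed.

Lemma cocycle_ext_short (sp : spath cov) : cocycle_ext (sval sp) = w sp.
Proof.
case: sp => p p_short /=.
have p_fine1 : fine_path p 1.
  split => // i; rewrite ltnS leqn0 => /eqP ->.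
  by case: p_short => U [covU pU]; exists U => // r _; exact: pU.
rewrite (cocycle_extE p_fine1) /subdiv_prod big_ord1 /subdiv_point /=.
by rewrite !divr1 mulr0n lerp0 lerp1 segment_path_plane; exact: short_extendE.
Qed.

Lemma cocycle_ext_Y (p : tpath X) : (forall t, Y (p t)) -> cocycle_ext p = 1%g.
Proof.
move=> pY; have [n [n0 p_fine]] := fine_path_exists p.
rewrite (@cocycle_extE p n) // /subdiv_prod big1 // => i _.
rewrite (short_extendE w (short_segment_path _ (p_fine i (ltn_ord i)))).
by case: w_cocycle => wY _ _; apply: wY => t; exact: pY.
Qed.

Lemma cocycle_ext_concat p q r : is_concat p q r ->
  cocycle_ext r = (cocycle_ext p * cocycle_ext q)%g.
Proof.
move=> pqr.
have [n1 p_fine] := fine_path_exists p; have [n2 q_fine] := fine_path_exists q.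
have [n3 r_fine] := fine_path_exists r.
have [n1_gt0 n2_gt0 n3_gt0] := And3 p_fine.1 q_fine.1 r_fine.1.
pose k := (n1 * n2 * n3)%N.
have k_gt0 : (0 < k)%N by rewrite !muln_gt0 n1_gt0 n2_gt0.
have p_finek : fine_path p k.
  by rewrite /k -mulnA; apply: fine_path_mul; rewrite ?muln_gt0 ?n2_gt0.
have q_finek : fine_path q k.
  by rewrite /k (mulnC n1) -mulnA; apply: fine_path_mul; rewrite ?muln_gt0 ?n1_gt0.
have r_finekk : fine_path r (k + k).
  rewrite addnn -muln2 /k (mulnC _ n3) -!mulnA.
  by apply: fine_path_mul; rewrite ?muln_gt0 ?n1_gt0 ?n2_gt0.
have kR : k%:R != 0 :> R by rewrite pnatr_eq0 -lt0n.
rewrite (cocycle_extE r_finekk) (cocycle_extE p_finek) (cocycle_extE q_finek).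
rewrite /subdiv_prod big_split_ord; congr (_ * _)%g; apply: eq_bigr => i _;
  congr short_extend; apply: tpath_ext => t;
  rewrite !segment_path_plane_piece ?addn_gt0 ?k_gt0 //=.
- have -> : (i%:R + sval t) / (k + k)%:R = ((i%:R + sval t) / k%:R) / 2.
    by rewrite addnn -muln2 natrM invfM mulrA.
  apply: concat_first_half pqr _.
  by apply: subdiv_param_bounds; [exact: ltn_ord | exact: unitI_bounds].
- have -> : ((k + i)%:R + sval t) / (k + k)%:R = ((i%:R + sval t) / k%:R + 1) / 2.
    by rewrite addnn -muln2 natrM natrD; field.
  apply: concat_second_half pqr _.
  by apply: subdiv_param_bounds; [exact: ltn_ord | exact: unitI_bounds].
Qed.

End CocycleExtension.

Lemma short_extend_square (X : topologicalType) (cov : set (set X)) (Y : set X)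
    (G : groupType) (w : spath cov -> G) (Phi : R * R -> X) (Phi_cont : continuous Phi)
    U a b d A B C D :
  short_cocycle Y w -> cov U -> (forall z, in_square a b d z -> U (Phi z)) ->
  in_square a b d A -> in_square a b d B -> in_square a b d C -> in_square a b d D ->
  (short_extend w (segment Phi_cont A B) * short_extend w (segment Phi_cont B D))%g =
  (short_extend w (segment Phi_cont A C) * short_extend w (segment Phi_cont C D))%g.
Proof.
move=> w_cocycle covU squareU inA inB inC inD.
have seg_short P Q : in_square a b d P -> in_square a b d Q ->
    short_path cov (segment Phi_cont P Q).
  move=> inP inQ; apply: short_segment_path; exists U => // r r01.
  exact/squareU/in_square_lerp.
have broken_short P : in_square a b d P -> short_path cov (broken_path Phi_cont A P D).
  by move=> inP; exists U; split => // t; exact/squareU/in_square_broken_line.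
have concat P : in_square a b d P ->
    short_extend w (broken_path Phi_cont A P D) =
    (short_extend w (segment Phi_cont A P) * short_extend w (segment Phi_cont P D))%g.
  move=> inP; apply: (short_extend_concat w_cocycle); rewrite ?segment1 ?segment0 //;
    by [exact: seg_short | exact: broken_short | exact: segment_concat].
rewrite -!concat //.
apply: (short_extend_homotopic w_cocycle); [exact: broken_short | exact: broken_short |].
have [H ABD_ACD HU] := plane_path_homotopic Phi_cont (@continuous_broken_line A B D)
  (@continuous_broken_line A C D) (S := U)
  (etrans (broken_line0 _ _ _) (esym (broken_line0 _ _ _)))
  (etrans (broken_line1 _ _ _) (esym (broken_line1 _ _ _)))
  (fun s t _ t01 => squareU _ (in_square_lerp (in_square_broken_line _ inA inB inD)
                                (in_square_broken_line _ inA inC inD) t01)).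
by exists H; split => //; exists U.
Qed.

Definition grid_point (n i j : nat) : R * R := (i%:R / n%:R, j%:R / n%:R).

Section HomotopyInvariance.
Variables (X : topologicalType) (cov : set (set X)) (Y : set X) (G : groupType).
Variables (w : spath cov -> G) (p q : tpath X) (H : unitI * unitI -> X).
Hypothesis cov_open_cover : open_cover cov.
Hypothesis w_cocycle : short_cocycle Y w.
Hypothesis pHq : is_rel_homotopy p q H.

Definition homotopy_plane (z : R * R) : X := H (clamp z.1, clamp z.2).

Lemma continuous_homotopy_plane : continuous homotopy_plane.
Proof.
have [H_cont _ _ _] := pHq.
move=> z; apply: (@continuous_comp _ _ _ (fun z : R * R => (clamp z.1, clamp z.2)) H);
  last exact: H_cont.
have c1 : {for z, continuous (fun z : R * R => clamp z.1)}.
  apply: (@continuous_comp _ _ _ fst clamp); [exact: cvg_fst | exact: continuous_clamp].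
have c2 : {for z, continuous (fun z : R * R => clamp z.2)}.
  apply: (@continuous_comp _ _ _ snd clamp); [exact: cvg_snd | exact: continuous_clamp].
exact: cvg_pair c1 c2.
Qed.

Variable n : nat.
Hypothesis n_gt0 : (0 < n)%N.
Hypothesis cells_short : forall i j, (i < n)%N -> (j < n)%N ->
  exists2 U, cov U & forall z,
    in_square (i%:R / n%:R) (j%:R / n%:R) n%:R^-1 z -> U (homotopy_plane z).

Let edge A B := short_extend w (segment continuous_homotopy_plane A B).

Definition grid_row j := \big[*%g/1%g]_(i < n) edge (grid_point n i j) (grid_point n i.+1 j).

Lemma grid_point_in_cell i j i' j' : (i <= i' <= i.+1)%N -> (j <= j' <= j.+1)%N ->
  in_square (i%:R / n%:R) (j%:R / n%:R) n%:R^-1 (grid_point n i' j').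
Proof. by move=> ii' jj'; split; exact: nat_step_bounds. Qed.

Lemma grid_side_edge j k (x : X) : (forall t, H (clamp (k%:R / n%:R), t) = x) ->
  edge (grid_point n k j) (grid_point n k j.+1) = 1%g.
Proof.
move=> Hk; apply: (short_extend_const cov_open_cover w_cocycle (x := x)) => t.
by rewrite /= /homotopy_plane /lerp /= subrr mulr0 addr0.
Qed.

Lemma grid_row_succ j : (j < n)%N -> grid_row j = grid_row j.+1.
Proof.
move=> ltjn.
apply: (@prodg_telescope G n (fun i => edge (grid_point n i j) (grid_point n i.+1 j))
  (fun i => edge (grid_point n i j.+1) (grid_point n i.+1 j.+1))
  (fun i => edge (grid_point n i j) (grid_point n i j.+1))).
- move=> i ltin; have [U covU cellU] := cells_short ltin ltjn.
  apply: (short_extend_square _ w_cocycle covU cellU);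
    by apply: grid_point_in_cell; rewrite ?leqnn ?leqnSn.
- apply: (@grid_side_edge j 0 (p I0)) => t.
  by rewrite mul0r clamp0; case: pHq => _ _ _ /(_ t)[].
- apply: (@grid_side_edge j n (p I1)) => t.
  by rewrite divff ?pnatr_eq0 -?lt0n // clamp1; case: pHq => _ _ _ /(_ t)[].
Qed.

Lemma grid_row_top : grid_row 0 = grid_row n.
Proof.
suff rows j : (j <= n)%N -> grid_row 0 = grid_row j by exact: rows.
by elim: j => // j IH ltjn; rewrite IH ?(ltnW ltjn) // grid_row_succ.
Qed.

Lemma cocycle_ext_grid_row (r : tpath X) j j' : (j' < n)%N -> (j' <= j <= j'.+1)%N ->
  (forall s, H (s, clamp (j%:R / n%:R)) = r s) -> cocycle_ext w r = grid_row j.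
Proof.
move=> ltj'n jj' Hr.
have nR : n%:R != 0 :> R by rewrite pnatr_eq0 -lt0n.
have pieces i s : path_plane r (lerp (subdiv_point (0, 0) (1, 0) n i)
                                     (subdiv_point (0, 0) (1, 0) n i.+1) s) =
                  homotopy_plane (lerp (grid_point n i j) (grid_point n i.+1 j) s).
  rewrite subdiv_axis_lerp // /path_plane /homotopy_plane -Hr.
  congr (H (clamp _, _)); last by rewrite /lerp /= subrr mulr0 addr0.
  by rewrite /lerp /= -addn1 natrD; field.
have r_fine : fine_path cov r n.
  split => // i ltin; have [U covU cellU] := cells_short ltin ltj'n.
  exists U => // s s01; rewrite pieces; apply: cellU; apply: in_square_lerp s01;
  by apply: grid_point_in_cell; rewrite ?leqnn ?leqnSn.
rewrite (cocycle_extE cov_open_cover w_cocycle r_fine) /subdiv_prod.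
by apply: eq_bigr => i _; congr short_extend; apply: tpath_ext => t; exact: pieces.
Qed.

End HomotopyInvariance.

Section Cocycles.
Variables (X : topologicalType) (cov : set (set X)) (Y : set X) (G : groupType).
Hypothesis cov_open_cover : open_cover cov.

Lemma cocycle_ext_homotopic (w : spath cov -> G) p q : short_cocycle Y w ->
  homotopic p q -> cocycle_ext w p = cocycle_ext w q.
Proof.
move=> w_cocycle [H pHq].
have [N lebN] := unit_square_lebesgue (continuous_homotopy_plane pHq) cov_open_cover.
have cells := unit_square_cells lebN.
have ext_row := cocycle_ext_grid_row cov_open_cover w_cocycle pHq (ltn0Sn N.+1) cells.
have [_ Hp Hq _] := pHq.
rewrite (@ext_row p 0 0) //; last by move=> s; rewrite mul0r clamp0.
rewrite (@ext_row q N.+2 N.+1) ?leqnSn ?ltnSn //; last first.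
  by move=> s; rewrite divff ?pnatr_eq0 // clamp1.
exact: (grid_row_top cov_open_cover w_cocycle pHq (ltn0Sn N.+1) cells).
Qed.

Lemma cocycle_ext_cocycle (w : spath cov -> G) :
  short_cocycle Y w -> cocycle Y (cocycle_ext w).
Proof.
move=> w_cocycle; split => [p|p q|p q r _].
- exact: (cocycle_ext_Y cov_open_cover w_cocycle).
- exact: cocycle_ext_homotopic.
- exact: (cocycle_ext_concat cov_open_cover w_cocycle).
Qed.

Lemma restr_short_cocycle_ext (w : spath cov -> G) : short_cocycle Y w ->
  restr_short cov (cocycle_ext w) = w.
Proof.
by move=> w_cocycle; apply: funext => sp; exact: (cocycle_ext_short cov_open_cover w_cocycle).
Qed.

Lemma restr_short_cocycle (u : tpath X -> G) :
  cocycle Y u -> short_cocycle Y (restr_short cov u).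
Proof.
case=> uY u_homot u_concat; split => [p|p q [H [pHq _]]|p q r].
- exact: uY.
- by apply: u_homot; exists H.
- exact: u_concat.
Qed.

Lemma restr_short_inj (u v : tpath X -> G) : cocycle Y u -> cocycle Y v ->
  restr_short cov u = restr_short cov v -> u = v.
Proof.
move=> u_coc v_coc uv; apply: (cocycle_eq_on_short cov_open_cover u_coc v_coc) => sp.
exact: (congr1 (fun f => f sp) uv).
Qed.

Lemma act0_cocycle (c : X -> G) (u : tpath X -> G) :
  cochain0 Y c -> cocycle Y u -> cocycle Y (act0 c u).
Proof.
move=> cY [uY u_homot u_concat]; split => [p pY|p q pq|p q r pq pqr]; rewrite /act0.
- by rewrite uY // !cY // invg1 !mulg1.
- have [H [_ _ Hq /(_ I1)[H0 H1]]] := pq.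
  by rewrite -(Hq I0) -(Hq I1) H0 H1 (u_homot _ _ pq).
- have r0 : r I0 = p I0 by apply: (pqr I0 I0).1; rewrite /= mulr0.
  have r1 : r I1 = q I1 by apply: (pqr I1 I1).2; rewrite /=; lra.
  by rewrite r0 r1 (u_concat p q r pq pqr) pq !mulgA mulgVK.
Qed.

End Cocycles.

Theorem theorem3p1 (X : topologicalType) (Y : set X) (G : groupType)
    (cov : set (set X)) :
  path_connected X -> open_cover cov ->
  (* restriction Z^1(X,Y) -> Z^1_U(X,Y) is a bijection *)
  ((forall u : tpath X -> G, cocycle Y u -> short_cocycle Y (restr_short cov u)) /\
   (forall u v : tpath X -> G, cocycle Y u -> cocycle Y v ->
      restr_short cov u = restr_short cov v -> u = v) /\
   (forall w : spath cov -> G, short_cocycle Y w ->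
      exists u : tpath X -> G, cocycle Y u /\ restr_short cov u = w)) /\
  (* the induced map H^1(X,Y) -> H^1_U(X,Y) is well defined and bijective *)
  ((forall u v : tpath X -> G, cocycle Y u -> cocycle Y v ->
      cohomologous Y u v -> short_cohomologous Y (restr_short cov u) (restr_short cov v)) /\
   (forall u v : tpath X -> G, cocycle Y u -> cocycle Y v ->
      short_cohomologous Y (restr_short cov u) (restr_short cov v) -> cohomologous Y u v) /\
   (forall w : spath cov -> G, short_cocycle Y w ->
      exists u : tpath X -> G, cocycle Y u /\
        short_cohomologous Y (restr_short cov u) w)).
Proof.
move=> _ cov_open_cover.
have ext_cocycle := cocycle_ext_cocycle (Y := Y) (G := G) cov_open_cover.
have ext_restr := restr_short_cocycle_ext (Y := Y) (G := G) cov_open_cover.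
have restr_inj := restr_short_inj (Y := Y) (G := G) cov_open_cover.
split; [split; [|split] | split; [|split]].
- exact: restr_short_cocycle.
- exact: restr_inj.
- move=> w w_coc; exists (cocycle_ext w).
  by rewrite ext_restr //; split; first exact: ext_cocycle.
- by move=> u v _ _ [c [cY ->]]; exists c.
- move=> u v u_coc v_coc [c [cY vc]]; exists c; split => //.
  by apply: restr_inj => //; exact: act0_cocycle.
- move=> w w_coc; exists (cocycle_ext w); split; first exact: ext_cocycle.
  exists (fun=> 1%g); split => //; rewrite ext_restr //; apply: funext => sp.
  by rewrite /act0_short mul1g invg1 mulg1.
Qed.
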